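(* Consider the system of ordinary differential equations \[ \begin{aligned} \frac{dr_a}{dt} &= \frac{m_a(p_a/\theta_{aa})^{n_{aa}}}{1+(p_a/\theta_{aa})^{n_{aa}}(p_b/\theta_b)^{n_b}}-\gamma_a r_a+A_1,\\ \frac{dr_b}{dt} &= \frac{m_b}{1+(p_a/\theta_a)^{n_a}}-\gamma_b r_b+B_1,\\ \frac{dp_a}{dt} &= k_a r_a-\delta_a p_a,\qquad \frac{dp_b}{dt} = k_b r_b-\delta_b p_b, \end{aligned} \] where $m_a,m_b,\gamma_a,\gamma_b,k_a,k_b,\delta_a,\delta_b,\theta_a,\theta_b,\theta_{aa}>0$, $A_1,B_1\ge 0$, and $n_a,n_b,n_{aa}$ are positive integers. Let $S^*=(r_a^*,r_b^*,p_a^*,p_b^* )$ be a steady state of this system with $p_a^*>0$, $p_b^*>0$. Set, with $p_a=p_a^*$, $p_b=p_b^*$, \[ X=\frac{m_a n_{aa} p_a^{n_{aa}-1}\theta_b^{2n_b}\theta_{aa}^{n_{aa}}}{(p_a^{n_{aa}}p_b^{n_b}+\theta_b^{n_b}\theta_{aa}^{n_{aa}})^2},\quad Y=-\frac{m_a n_b p_a^{2n_{aa}}p_b^{n_b-1}\theta_b^{n_b}}{(p_a^{n_{aa}}p_b^{n_b}+\theta_b^{n_b}\theta_{aa}^{n_{aa}})^2},\quad Z=-\frac{m_b n_a p_a^{n_a-1}\theta_a^{n_a}}{(p_a^{n_a}+\theta_a^{n_a})^2}, \] and \[ \begin{aligned} \epsilon_1&=\gamma_a+\gamma_b+\delta_a+\delta_b,\\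 \epsilon_2&=\gamma_a\gamma_b+(\gamma_a+\gamma_b)(\delta_a+\delta_b)+\delta_a\delta_b-k_aX,\\ \epsilon_3&=\delta_a\delta_b(\gamma_a+\gamma_b)+(\delta_a+\delta_b)\gamma_a\gamma_b-k_a(\delta_b+\gamma_b)X,\\ \epsilon_4&=\gamma_a\gamma_b\delta_a\delta_b-k_ak_bYZ-k_a\gamma_b\delta_bX. \end{aligned} \] If $\epsilon_1>0$, $\epsilon_3>0$, $\epsilon_4>0$ and $\epsilon_1\epsilon_2\epsilon_3-\epsilon_1^2\epsilon_4-\epsilon_3^2>0$, then $S^*$ is locally asymptotically stable.
   Context: This models a two-gene network in which gene $a$ is co-regulated by activation from its own protein $p_a$ and repression by protein $p_b$ (combined via a non-competitive AND logic), and gene $b$ is repressed by $p_a$; $r_a,r_b$ are mRNA concentrations and $p_a,p_b$ protein concentrations. A steady state is a point where all four right-hand sides vanish. *)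

From Stdlib Require Import Reals.
From Coquelicot Require Import Coquelicot.
Open Scope R_scope.

Definition f_ra (ma thaa thb : R) (naa nb : nat) (ga A1 : R)
  (ra rb pa pb : R) : R :=
  ma * (pa / thaa) ^ naa / (1 + (pa / thaa) ^ naa * (pb / thb) ^ nb)
  - ga * ra + A1.

Definition f_rb (mb tha : R) (na : nat) (gb B1 : R) (ra rb pa pb : R) : R :=
  mb / (1 + (pa / tha) ^ na) - gb * rb + B1.

Definition f_pa (ka da : R) (ra rb pa pb : R) : R := ka * ra - da * pa.

Definition f_pb (kb db : R) (ra rb pa pb : R) : R := kb * rb - db * pb.

(* distance on R^4 (max norm; all norms on R^4 are equivalent) *)
Definition dist4 (a1 a2 a3 a4 b1 b2 b3 b4 : R) : R :=
  Rmax (Rmax (Rabs (a1 - b1)) (Rabs (a2 - b2)))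
       (Rmax (Rabs (a3 - b3)) (Rabs (a4 - b4))).

Definition forward_solution (f1 f2 f3 f4 : R -> R -> R -> R -> R)
  (x1 x2 x3 x4 : R -> R) : Prop :=
  (forall t, 0 < t ->
     is_derive x1 t (f1 (x1 t) (x2 t) (x3 t) (x4 t)) /\
     is_derive x2 t (f2 (x1 t) (x2 t) (x3 t) (x4 t)) /\
     is_derive x3 t (f3 (x1 t) (x2 t) (x3 t) (x4 t)) /\
     is_derive x4 t (f4 (x1 t) (x2 t) (x3 t) (x4 t))) /\
  (forall e, 0 < e -> exists d, 0 < d /\ forall t, 0 <= t < d ->
     dist4 (x1 t) (x2 t) (x3 t) (x4 t) (x1 0) (x2 0) (x3 0) (x4 0) < e).

Definition locally_asymptotically_stable (f1 f2 f3 f4 : R -> R -> R -> R -> R)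
  (s1 s2 s3 s4 : R) : Prop :=
  (forall eps, 0 < eps -> exists del, 0 < del /\
     forall x1 x2 x3 x4, forward_solution f1 f2 f3 f4 x1 x2 x3 x4 ->
       dist4 (x1 0) (x2 0) (x3 0) (x4 0) s1 s2 s3 s4 < del ->
       forall t, 0 <= t -> dist4 (x1 t) (x2 t) (x3 t) (x4 t) s1 s2 s3 s4 < eps) /\
  (exists eta, 0 < eta /\
     forall x1 x2 x3 x4, forward_solution f1 f2 f3 f4 x1 x2 x3 x4 ->
       dist4 (x1 0) (x2 0) (x3 0) (x4 0) s1 s2 s3 s4 < eta ->
       forall e, 0 < e -> exists T, forall t, T <= t ->
         dist4 (x1 t) (x2 t) (x3 t) (x4 t) s1 s2 s3 s4 < e).

Definition Xq (ma thaa thb : R) (naa nb : nat) (pa pb : R) : R :=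
  ma * INR naa * pa ^ (naa - 1) * thb ^ (2 * nb) * thaa ^ naa
  / (pa ^ naa * pb ^ nb + thb ^ nb * thaa ^ naa) ^ 2.

Definition Yq (ma thaa thb : R) (naa nb : nat) (pa pb : R) : R :=
  - (ma * INR nb * pa ^ (2 * naa) * pb ^ (nb - 1) * thb ^ nb
     / (pa ^ naa * pb ^ nb + thb ^ nb * thaa ^ naa) ^ 2).

Definition Zq (mb tha : R) (na : nat) (pa : R) : R :=
  - (mb * INR na * pa ^ (na - 1) * tha ^ na / (pa ^ na + tha ^ na) ^ 2).

(* At the steady state the Jacobian of the network is
     J = [[-ga, 0, X, Y], [0, -gb, Z, 0], [ka, 0, -da, 0], [0, kb, 0, -db]]
   with X >= 0 and Y, Z <= 0.  Replacing Y, Z by |Y|, |Z| gives a Metzler matrix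
   M, and e4 > 0, i.e. ka gb db X + ka kb |Y| |Z| < ga gb da db, provides positive
   vectors v, w with M v < 0 and M^T w < 0.  For the diagonal weights
   d_i = w_i / v_i the form sum_i d_i y_i (J y)_i is then negative definite, since
   the off-diagonal entries of J are dominated by those of M.  The vector field
   being differentiable at the steady state, V(x) = sum_i d_i (x_i - s_i)^2 is
   still a strict Lyapunov function of the nonlinear system nearby, so V decays
   exponentially along every solution starting close enough; this gives stability
   and attractivity. *)

From Stdlib Require Import Reals Lra Psatz Classical.
From Coquelicot Require Import Coquelicot.
Open Scope R_scope.

(** * Quadratic forms on R^4 *)

Definition norm4 (y1 y2 y3 y4 : R) : R :=
  Rmax (Rmax (Rabs y1) (Rabs y2)) (Rmax (Rabs y3) (Rabs y4)).

Definition sqnorm4 (y1 y2 y3 y4 : R) : R := y1 ^ 2 + y2 ^ 2 + y3 ^ 2 + y4 ^ 2.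

Definition wsq4 (d1 d2 d3 d4 y1 y2 y3 y4 : R) : R :=
  d1 * y1 ^ 2 + d2 * y2 ^ 2 + d3 * y3 ^ 2 + d4 * y4 ^ 2.

Definition wdot4 (d1 d2 d3 d4 y1 y2 y3 y4 z1 z2 z3 z4 : R) : R :=
  d1 * y1 * z1 + d2 * y2 * z2 + d3 * y3 * z3 + d4 * y4 * z4.

Lemma dist4_norm4 (a1 a2 a3 a4 b1 b2 b3 b4 : R) :
  dist4 a1 a2 a3 a4 b1 b2 b3 b4 = norm4 (a1 - b1) (a2 - b2) (a3 - b3) (a4 - b4).
Proof. reflexivity. Qed.

Lemma Rabs_le_norm4 (y1 y2 y3 y4 : R) :
  Rabs y1 <= norm4 y1 y2 y3 y4 /\ Rabs y2 <= norm4 y1 y2 y3 y4 /\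
  Rabs y3 <= norm4 y1 y2 y3 y4 /\ Rabs y4 <= norm4 y1 y2 y3 y4.
Proof. unfold norm4, Rmax; repeat destruct Rle_dec; repeat split; lra. Qed.

Lemma norm4_nonneg (y1 y2 y3 y4 : R) : 0 <= norm4 y1 y2 y3 y4.
Proof.
  destruct (Rabs_le_norm4 y1 y2 y3 y4) as [h _]; pose proof (Rabs_pos y1); lra.
Qed.

Lemma norm4_sq_le_sqnorm4 (y1 y2 y3 y4 : R) :
  norm4 y1 y2 y3 y4 ^ 2 <= sqnorm4 y1 y2 y3 y4.
Proof.
  unfold sqnorm4, norm4.
  rewrite <- (pow2_abs y1), <- (pow2_abs y2), <- (pow2_abs y3), <- (pow2_abs y4).
  pose proof (Rabs_pos y1); pose proof (Rabs_pos y2);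
  pose proof (Rabs_pos y3); pose proof (Rabs_pos y4).
  unfold Rmax; repeat destruct Rle_dec; nra.
Qed.

Lemma wsq4_le_norm4 (d1 d2 d3 d4 y1 y2 y3 y4 : R) :
  0 <= d1 -> 0 <= d2 -> 0 <= d3 -> 0 <= d4 ->
  wsq4 d1 d2 d3 d4 y1 y2 y3 y4 <= (d1 + d2 + d3 + d4) * norm4 y1 y2 y3 y4 ^ 2.
Proof.
  intros h1 h2 h3 h4.
  destruct (Rabs_le_norm4 y1 y2 y3 y4) as (a1 & a2 & a3 & a4).
  pose proof (norm4_nonneg y1 y2 y3 y4).
  assert (sq : forall y, Rabs y <= norm4 y1 y2 y3 y4 -> y ^ 2 <= norm4 y1 y2 y3 y4 ^ 2).
  { intros y hy; rewrite <- pow2_abs; pose proof (Rabs_pos y); nra. }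
  apply sq in a1, a2, a3, a4.
  unfold wsq4; nra.
Qed.

Lemma wsq4_ge_sqnorm4 (m d1 d2 d3 d4 y1 y2 y3 y4 : R) :
  m <= d1 -> m <= d2 -> m <= d3 -> m <= d4 ->
  m * sqnorm4 y1 y2 y3 y4 <= wsq4 d1 d2 d3 d4 y1 y2 y3 y4.
Proof.
  intros; unfold sqnorm4, wsq4.
  pose proof (pow2_ge_0 y1); pose proof (pow2_ge_0 y2);
  pose proof (pow2_ge_0 y3); pose proof (pow2_ge_0 y4); nra.
Qed.

Lemma wsq4_nonneg (d1 d2 d3 d4 y1 y2 y3 y4 : R) :
  0 <= d1 -> 0 <= d2 -> 0 <= d3 -> 0 <= d4 -> 0 <= wsq4 d1 d2 d3 d4 y1 y2 y3 y4.
Proof.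
  intros; unfold wsq4.
  pose proof (pow2_ge_0 y1); pose proof (pow2_ge_0 y2);
  pose proof (pow2_ge_0 y3); pose proof (pow2_ge_0 y4); nra.
Qed.

Lemma norm4_lt_of_wsq4 (m d1 d2 d3 d4 y1 y2 y3 y4 r : R) :
  0 < m -> m <= d1 -> m <= d2 -> m <= d3 -> m <= d4 -> 0 < r ->
  wsq4 d1 d2 d3 d4 y1 y2 y3 y4 < m * r ^ 2 -> norm4 y1 y2 y3 y4 < r.
Proof.
  intros hm h1 h2 h3 h4 hr hV.
  pose proof (wsq4_ge_sqnorm4 m d1 d2 d3 d4 y1 y2 y3 y4 h1 h2 h3 h4).
  pose proof (norm4_sq_le_sqnorm4 y1 y2 y3 y4).
  pose proof (norm4_nonneg y1 y2 y3 y4).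
  assert (norm4 y1 y2 y3 y4 ^ 2 < r ^ 2) by nra.
  nra.
Qed.

Definition min4 (a1 a2 a3 a4 : R) : R := Rmin (Rmin a1 a2) (Rmin a3 a4).

Lemma min4_spec (a1 a2 a3 a4 : R) : 0 < a1 -> 0 < a2 -> 0 < a3 -> 0 < a4 ->
  0 < min4 a1 a2 a3 a4 /\ min4 a1 a2 a3 a4 <= a1 /\ min4 a1 a2 a3 a4 <= a2 /\
  min4 a1 a2 a3 a4 <= a3 /\ min4 a1 a2 a3 a4 <= a4.
Proof. intros; unfold min4, Rmin; repeat destruct Rle_dec; lra. Qed.

(** * One-variable calculus *)

Lemma is_derive_nonpos_le (f df : R -> R) (a b : R) : a < b ->
  (forall c, a <= c <= b -> continuity_pt f c) ->
  (forall c, a < c < b -> is_derive f c (df c)) ->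
  (forall c, a < c < b -> df c <= 0) -> f b <= f a.
Proof.
  intros hab hcont hder hneg.
  assert (pr : forall c, a < c < b -> derivable_pt f c).
  { intros c hc; apply ex_derive_Reals_0; eexists; exact (hder c hc). }
  destruct (MVT f id a b pr (fun c _ => derivable_pt_id c) hab hcont) as (c & hc & E).
  { intros c _; apply derivable_continuous_pt, derivable_pt_id. }
  rewrite derive_pt_id, Derive_Reals, (is_derive_unique _ _ _ (hder c hc)) in E.
  unfold id in E; specialize (hneg c hc); nra.
Qed.

Lemma first_exit (g : R -> R) (a b K : R) : a <= b -> g a < K -> K <= g b ->
  (forall u, a <= u <= b -> continuity_pt g u) ->
  exists s, a < s <= b /\ K <= g s /\ forall u, a <= u < s -> g u < K.
Proof.
  intros hab hga hgb hcont.
  set (E := fun x => a <= x <= b /\ forall u, a <= u <= x -> g u < K).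
  assert (hEa : E a) by (split; [lra | intros u hu; replace u with a by lra; exact hga]).
  destruct (completeness E) as (s & ub & lub).
  { exists b; intros x [hx _]; lra. }
  { exists a; exact hEa. }
  assert (has : a <= s) by exact (ub a hEa).
  assert (hsb : s <= b) by (apply lub; intros x [hx _]; lra).
  assert (below : forall u, a <= u < s -> g u < K).
  { intros u hu.
    destruct (classic (exists x, E x /\ u <= x)) as [(x & (_ & hx) & hux) | hno].
    - apply hx; lra.
    - assert (s <= u) by (apply lub; intros x hx; apply Rnot_lt_le; intros hxu;
                          apply hno; exists x; split; [exact hx | lra]).
      lra. }
  assert (hKs : K <= g s).
  { apply Rnot_lt_le; intros hlt.
    destruct (proj1 (continuity_pt_locally g s) (hcont s (conj has hsb))
                (mkposreal (K - g s) ltac:(lra))) as (del & hdel).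
    simpl in hdel.
    assert (hsb' : s < b) by (destruct (Req_dec s b) as [-> | ]; lra).
    set (s' := Rmin b (s + del / 2)).
    assert (hs' : s < s')
      by (unfold s'; apply Rmin_glb_lt; [lra | pose proof (cond_pos del); lra]).
    assert (E s').
    { split; [split; [lra | apply Rmin_l] |].
      intros u hu; destruct (Rlt_le_dec u s) as [hus | hsu]; [apply below; lra |].
      assert (Rabs (g u - g s) < K - g s).
      { apply hdel; change (Rabs (u - s) < del).
        pose proof (Rmin_r b (s + del / 2)); rewrite Rabs_right; unfold s' in *; lra. }
      pose proof (Rle_abs (g u - g s)); lra. }
    pose proof (ub s' H); lra. }
  exists s; repeat split; try lra; auto.
  destruct (Req_dec s a) as [-> | ]; lra.
Qed.

Lemma le_init_of_deriv_nonpos_below (psi dpsi : R -> R) (K : R) : psi 0 < K ->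
  (forall t, 0 <= t -> continuity_pt psi t) ->
  (forall t, 0 < t -> is_derive psi t (dpsi t)) ->
  (forall t, 0 < t -> psi t < K -> dpsi t <= 0) ->
  forall t, 0 <= t -> psi t <= psi 0.
Proof.
  intros h0 hcont hder hneg.
  assert (decr : forall t, 0 < t -> (forall u, 0 < u < t -> psi u < K) -> psi t <= psi 0).
  { intros t ht hK; apply (is_derive_nonpos_le psi dpsi); [exact ht | | |].
    - intros c hc; apply hcont; lra.
    - intros c hc; apply hder; lra.
    - intros c hc; apply hneg; [lra | auto]. }
  assert (stays : forall t, 0 <= t -> psi t < K).
  { intros t ht; apply Rnot_le_lt; intros hK.
    destruct (first_exit psi 0 t K) as (s & hs & hKs & hbelow); auto.
    { intros u hu; apply hcont; lra. }
    assert (psi s <= psi 0) by (apply decr; [lra | intros u hu; apply hbelow; lra]).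
    lra. }
  intros t ht; destruct (Req_dec t 0) as [-> | ]; [lra |].
  apply decr; [lra | intros u hu; apply stays; lra].
Qed.

Lemma is_derive_extend0 (x : R -> R) (t l : R) : 0 < t ->
  is_derive x t l -> is_derive (fun u => x (Rmax 0 u)) t l.
Proof.
  intros ht H; apply (is_derive_ext_loc x); [| exact H].
  apply (filter_imp (fun u => 0 < u)); [| exact (open_gt 0 t ht)].
  intros u hu; rewrite Rmax_right; lra.
Qed.

Lemma continuity_pt_extend0 (x : R -> R) :
  (forall t, 0 < t -> ex_derive x t) ->
  (forall e, 0 < e -> exists d, 0 < d /\ forall t, 0 <= t < d -> Rabs (x t - x 0) < e) ->
  forall t, 0 <= t -> continuity_pt (fun u => x (Rmax 0 u)) t.
Proof.
  intros hder hright t ht.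
  destruct (Req_dec t 0) as [-> | hne].
  - apply continuity_pt_locally; intros eps.
    destruct (hright eps (cond_pos eps)) as (d & hd & hx).
    exists (mkposreal d hd); intros u hu; change (Rabs (u - 0) < d) in hu.
    rewrite (Rmax_left 0 0) by lra.
    destruct (Rle_dec 0 u).
    + rewrite Rmax_right by lra; apply hx; rewrite Rabs_right in hu; lra.
    + rewrite Rmax_left, Rminus_diag, Rabs_R0 by lra; apply cond_pos.
  - destruct (hder t) as (l & hl); [lra |].
    apply continuity_pt_filterlim.
    apply (ex_derive_continuous (K := R_AbsRing) (V := R_NormedModule)
             (fun u => x (Rmax 0 u))).
    exists l; apply is_derive_extend0; [lra | exact hl].
Qed.

Lemma forward_solution_continuity (f1 f2 f3 f4 : R -> R -> R -> R -> R) (x1 x2 x3 x4 : R -> R) :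
  forward_solution f1 f2 f3 f4 x1 x2 x3 x4 -> forall t, 0 <= t ->
  continuity_pt (fun u => x1 (Rmax 0 u)) t /\ continuity_pt (fun u => x2 (Rmax 0 u)) t /\
  continuity_pt (fun u => x3 (Rmax 0 u)) t /\ continuity_pt (fun u => x4 (Rmax 0 u)) t.
Proof.
  intros [hder hright] t ht.
  assert (hright' : forall e, 0 < e -> exists d, 0 < d /\ forall t, 0 <= t < d ->
     Rabs (x1 t - x1 0) < e /\ Rabs (x2 t - x2 0) < e /\
     Rabs (x3 t - x3 0) < e /\ Rabs (x4 t - x4 0) < e).
  { intros e he; destruct (hright e he) as (d & hd & hx); exists d; split; [exact hd |].
    intros u hu; specialize (hx u hu); rewrite dist4_norm4 in hx.
    pose proof (Rabs_le_norm4 (x1 u - x1 0) (x2 u - x2 0) (x3 u - x3 0) (x4 u - x4 0)).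
    lra. }
  repeat split; apply continuity_pt_extend0; try exact ht;
    try (intros u hu; destruct (hder u hu) as (h1 & h2 & h3 & h4); eexists; eassumption);
    intros e he; destruct (hright' e he) as (d & hd & hx);
    exists d; split; try exact hd; intros u hu; apply hx, hu.
Qed.

Lemma continuity_pt_wsq4_exp (g1 g2 g3 g4 : R -> R) (d1 d2 d3 d4 s1 s2 s3 s4 k t : R) :
  continuity_pt g1 t -> continuity_pt g2 t -> continuity_pt g3 t -> continuity_pt g4 t ->
  continuity_pt (fun u => wsq4 d1 d2 d3 d4 (g1 u - s1) (g2 u - s2) (g3 u - s3) (g4 u - s4)
                          * exp (k * u)) t.
Proof.
  intros c1 c2 c3 c4.
  assert (sq : forall (g : R -> R) d s,
             continuity_pt g t -> continuity_pt (fun u => d * (g u - s) ^ 2) t).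
  { intros g d s cg.
    apply continuity_pt_mult; [apply continuity_pt_const; intros ? ?; reflexivity |].
    apply (continuity_pt_comp (fun u => g u - s) (fun z => z ^ 2)).
    - apply continuity_pt_minus; [exact cg | apply continuity_pt_const; intros ? ?; reflexivity].
    - apply derivable_continuous_pt, derivable_pt_pow. }
  apply continuity_pt_mult; [unfold wsq4; repeat apply continuity_pt_plus; apply sq; assumption |].
  apply continuity_pt_filterlim.
  apply (ex_derive_continuous (K := R_AbsRing) (V := R_NormedModule) (fun u => exp (k * u))).
  auto_derive; constructor.
Qed.

Lemma is_derive_wsq4_exp (g1 g2 g3 g4 : R -> R) (l1 l2 l3 l4 d1 d2 d3 d4 s1 s2 s3 s4 k t : R) :
  is_derive g1 t l1 -> is_derive g2 t l2 -> is_derive g3 t l3 -> is_derive g4 t l4 ->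
  is_derive (fun u => wsq4 d1 d2 d3 d4 (g1 u - s1) (g2 u - s2) (g3 u - s3) (g4 u - s4)
                      * exp (k * u)) t
    ((2 * wdot4 d1 d2 d3 d4 (g1 t - s1) (g2 t - s2) (g3 t - s3) (g4 t - s4) l1 l2 l3 l4
      + k * wsq4 d1 d2 d3 d4 (g1 t - s1) (g2 t - s2) (g3 t - s3) (g4 t - s4)) * exp (k * t)).
Proof.
  intros h1 h2 h3 h4; unfold wsq4, wdot4; auto_derive.
  - repeat split; eexists; eassumption.
  - replace (Derive (fun u => g1 u) t) with l1 by (symmetry; apply is_derive_unique, h1).
    replace (Derive (fun u => g2 u) t) with l2 by (symmetry; apply is_derive_unique, h2).
    replace (Derive (fun u => g3 u) t) with l3 by (symmetry; apply is_derive_unique, h3).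
    replace (Derive (fun u => g4 u) t) with l4 by (symmetry; apply is_derive_unique, h4).
    ring.
Qed.

Lemma exp_decay_lt (k a b t : R) : 0 < k -> 0 < b -> a / (k * b) <= t ->
  a * exp (- k * t) < b.
Proof.
  intros hk hb ht; pose proof (exp_pos (- k * t)).
  destruct (Rle_lt_dec a 0); [nra |].
  assert (hkt : 0 < k * t) by (assert (0 < a / (k * b)) by (apply Rdiv_lt_0_compat; nra); nra).
  assert (a <= k * t * b).
  { apply (Rmult_le_reg_r (/ (k * b))); [apply Rinv_0_lt_compat; nra |].
    replace (k * t * b * / (k * b)) with t by (field; lra); exact ht. }
  pose proof (exp_ineq1 (k * t) ltac:(lra)).
  assert (exp (- k * t) * exp (k * t) = 1)
    by (rewrite <- exp_plus; replace (- k * t + k * t) with 0 by ring; apply exp_0).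
  nra.
Qed.

(** * Lyapunov functions and linearization *)

Section LyapunovStability.

Variables (f1 f2 f3 f4 : R -> R -> R -> R -> R) (s1 s2 s3 s4 d1 d2 d3 d4 c rho : R).
Hypotheses (hd1 : 0 < d1) (hd2 : 0 < d2) (hd3 : 0 < d3) (hd4 : 0 < d4).
Hypotheses (hc : 0 < c) (hrho : 0 < rho).
Hypothesis lyap : forall x1 x2 x3 x4,
  norm4 (x1 - s1) (x2 - s2) (x3 - s3) (x4 - s4) < rho ->
  wdot4 d1 d2 d3 d4 (x1 - s1) (x2 - s2) (x3 - s3) (x4 - s4)
    (f1 x1 x2 x3 x4) (f2 x1 x2 x3 x4) (f3 x1 x2 x3 x4) (f4 x1 x2 x3 x4)
  <= - c * sqnorm4 (x1 - s1) (x2 - s2) (x3 - s3) (x4 - s4).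

Let dmin := min4 d1 d2 d3 d4.
Let dsum := d1 + d2 + d3 + d4.
Let V (x1 x2 x3 x4 : R -> R) (t : R) : R :=
  wsq4 d1 d2 d3 d4 (x1 t - s1) (x2 t - s2) (x3 t - s3) (x4 t - s4).

Let dmin_spec : 0 < dmin /\ dmin <= d1 /\ dmin <= d2 /\ dmin <= d3 /\ dmin <= d4.
Proof. exact (min4_spec d1 d2 d3 d4 hd1 hd2 hd3 hd4). Qed.

Lemma lyapunov_rate (x1 x2 x3 x4 : R) :
  wsq4 d1 d2 d3 d4 (x1 - s1) (x2 - s2) (x3 - s3) (x4 - s4) < dmin * rho ^ 2 ->
  2 * wdot4 d1 d2 d3 d4 (x1 - s1) (x2 - s2) (x3 - s3) (x4 - s4)
        (f1 x1 x2 x3 x4) (f2 x1 x2 x3 x4) (f3 x1 x2 x3 x4) (f4 x1 x2 x3 x4)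
    + 2 * c / dsum * wsq4 d1 d2 d3 d4 (x1 - s1) (x2 - s2) (x3 - s3) (x4 - s4) <= 0.
Proof.
  intros hV; destruct dmin_spec as (hm & hm1 & hm2 & hm3 & hm4).
  pose proof (lyap x1 x2 x3 x4
    (norm4_lt_of_wsq4 dmin d1 d2 d3 d4 _ _ _ _ rho hm hm1 hm2 hm3 hm4 hrho hV)).
  pose proof (wsq4_le_norm4 d1 d2 d3 d4 (x1 - s1) (x2 - s2) (x3 - s3) (x4 - s4)
                ltac:(lra) ltac:(lra) ltac:(lra) ltac:(lra)) as hW.
  pose proof (norm4_sq_le_sqnorm4 (x1 - s1) (x2 - s2) (x3 - s3) (x4 - s4)).
  assert (hD : 0 < dsum) by (unfold dsum; lra).
  assert (2 * c / dsum * wsq4 d1 d2 d3 d4 (x1 - s1) (x2 - s2) (x3 - s3) (x4 - s4)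
          <= 2 * c * sqnorm4 (x1 - s1) (x2 - s2) (x3 - s3) (x4 - s4)).
  { apply (Rmult_le_reg_l dsum); [exact hD |].
    replace (dsum * (2 * c / dsum * wsq4 d1 d2 d3 d4 (x1 - s1) (x2 - s2) (x3 - s3) (x4 - s4)))
      with (2 * c * wsq4 d1 d2 d3 d4 (x1 - s1) (x2 - s2) (x3 - s3) (x4 - s4)) by (field; lra).
    assert (wsq4 d1 d2 d3 d4 (x1 - s1) (x2 - s2) (x3 - s3) (x4 - s4)
            <= dsum * sqnorm4 (x1 - s1) (x2 - s2) (x3 - s3) (x4 - s4))
      by (apply (Rle_trans _ _ _ hW), Rmult_le_compat_l; lra).
    nra. }
  lra.
Qed.

Lemma lyapunov_decay (x1 x2 x3 x4 : R -> R) :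
  forward_solution f1 f2 f3 f4 x1 x2 x3 x4 ->
  V x1 x2 x3 x4 0 < dmin * rho ^ 2 ->
  forall t, 0 <= t -> V x1 x2 x3 x4 t <= V x1 x2 x3 x4 0 * exp (- (2 * c / dsum) * t).
Proof.
  intros sol hV0.
  set (k := 2 * c / dsum).
  (* Extending the solution to negative times by its initial value makes the mean
     value theorem applicable on [0, t]. *)
  set (psi := fun u => wsq4 d1 d2 d3 d4 (x1 (Rmax 0 u) - s1) (x2 (Rmax 0 u) - s2)
                         (x3 (Rmax 0 u) - s3) (x4 (Rmax 0 u) - s4) * exp (k * u)).
  assert (psi_V : forall u, 0 <= u -> psi u = V x1 x2 x3 x4 u * exp (k * u))
    by (intros u hu; unfold psi; rewrite Rmax_right by lra; reflexivity).
  assert (psi0 : psi 0 = V x1 x2 x3 x4 0) by (rewrite psi_V, Rmult_0_r, exp_0 by lra; ring).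
  assert (mono : forall t, 0 <= t -> psi t <= psi 0).
  { apply (le_init_of_deriv_nonpos_below psi
      (fun u => (2 * wdot4 d1 d2 d3 d4 (x1 u - s1) (x2 u - s2) (x3 u - s3) (x4 u - s4)
                   (f1 (x1 u) (x2 u) (x3 u) (x4 u)) (f2 (x1 u) (x2 u) (x3 u) (x4 u))
                   (f3 (x1 u) (x2 u) (x3 u) (x4 u)) (f4 (x1 u) (x2 u) (x3 u) (x4 u))
                 + k * V x1 x2 x3 x4 u) * exp (k * u)) (dmin * rho ^ 2)).
    - rewrite psi0; exact hV0.
    - intros u hu; destruct (forward_solution_continuity _ _ _ _ _ _ _ _ sol u hu)
        as (c1 & c2 & c3 & c4).
      exact (continuity_pt_wsq4_exp _ _ _ _ d1 d2 d3 d4 s1 s2 s3 s4 k u c1 c2 c3 c4).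
    - intros u hu; destruct (proj1 sol u hu) as (h1 & h2 & h3 & h4).
      pose proof (is_derive_wsq4_exp _ _ _ _ _ _ _ _ d1 d2 d3 d4 s1 s2 s3 s4 k u
        (is_derive_extend0 _ _ _ hu h1) (is_derive_extend0 _ _ _ hu h2)
        (is_derive_extend0 _ _ _ hu h3) (is_derive_extend0 _ _ _ hu h4)) as P.
      cbv beta in P; rewrite (Rmax_right 0 u) in P by lra; exact P.
    - intros u hu hlt; rewrite psi_V in hlt by lra.
      assert (0 < k) by (apply Rdiv_lt_0_compat; unfold dsum; lra).
      assert (1 <= exp (k * u)) by (pose proof (exp_ineq1_le (k * u)); nra).
      assert (0 <= V x1 x2 x3 x4 u) by (apply wsq4_nonneg; lra).
      assert (hVu : V x1 x2 x3 x4 u < dmin * rho ^ 2) by nra.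
      pose proof (lyapunov_rate (x1 u) (x2 u) (x3 u) (x4 u) hVu).
      pose proof (exp_pos (k * u)); unfold V, k in *; nra. }
  intros t ht; specialize (mono t ht); rewrite psi_V, psi0 in mono by lra.
  replace (V x1 x2 x3 x4 t) with (V x1 x2 x3 x4 t * exp (k * t) * exp (- k * t))
    by (rewrite Rmult_assoc, <- exp_plus; replace (k * t + - k * t) with 0 by ring;
        rewrite exp_0; ring).
  apply Rmult_le_compat_r; [apply Rlt_le, exp_pos | exact mono].
Qed.

Lemma wsq4_lt_of_norm4 (y1 y2 y3 y4 r : R) : 0 < r ->
  norm4 y1 y2 y3 y4 < r * dmin / dsum -> wsq4 d1 d2 d3 d4 y1 y2 y3 y4 < dmin * r ^ 2.
Proof.
  intros hr hy; destruct dmin_spec as (hm & hm1 & hm2 & hm3 & hm4).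
  assert (hD : dmin <= dsum) by (unfold dsum; lra).
  pose proof (wsq4_le_norm4 d1 d2 d3 d4 y1 y2 y3 y4
                ltac:(lra) ltac:(lra) ltac:(lra) ltac:(lra)) as hW; fold dsum in hW.
  pose proof (norm4_nonneg y1 y2 y3 y4).
  assert (norm4 y1 y2 y3 y4 ^ 2 < (r * dmin / dsum) ^ 2)
    by (set (q := r * dmin / dsum) in *; nra).
  assert (dsum * (r * dmin / dsum) ^ 2 <= dmin * r ^ 2).
  { replace (dsum * (r * dmin / dsum) ^ 2) with (dmin * r ^ 2 * (dmin / dsum)) by (field; lra).
    assert (dmin / dsum <= 1) by (apply (proj1 (Rdiv_le_1 dmin dsum ltac:(lra))); lra).
    assert (0 < dmin * r ^ 2) by (apply Rmult_lt_0_compat; [lra | apply pow_lt; lra]).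
    nra. }
  nra.
Qed.

Lemma lyapunov_las : locally_asymptotically_stable f1 f2 f3 f4 s1 s2 s3 s4.
Proof.
  destruct dmin_spec as (hm & hm1 & hm2 & hm3 & hm4).
  assert (hD : 0 < dsum) by (unfold dsum; lra).
  set (k := 2 * c / dsum).
  assert (hk : 0 < k) by (apply Rdiv_lt_0_compat; lra).
  split.
  - intros eps heps; set (r := Rmin rho eps).
    assert (hr : 0 < r) by (apply Rmin_pos; lra).
    exists (r * dmin / dsum); split; [apply Rdiv_lt_0_compat; nra |].
    intros x1 x2 x3 x4 sol hx t ht; rewrite dist4_norm4 in *.
    pose proof (wsq4_lt_of_norm4 _ _ _ _ r hr hx) as h0.
    assert (r <= rho) by apply Rmin_l; assert (r <= eps) by apply Rmin_r.
    assert (dmin * r ^ 2 <= dmin * rho ^ 2)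
      by (apply Rmult_le_compat_l; [lra | apply pow_incr; lra]).
    pose proof (lyapunov_decay x1 x2 x3 x4 sol ltac:(unfold V; lra) t ht) as hdec.
    assert (exp (- k * t) <= 1).
    { rewrite <- exp_0; destruct (Req_dec t 0) as [-> | ];
        [rewrite Rmult_0_r; lra | apply Rlt_le, exp_increasing; nra]. }
    apply (Rlt_le_trans _ r); [| assumption].
    apply (norm4_lt_of_wsq4 dmin d1 d2 d3 d4); try assumption.
    assert (0 <= V x1 x2 x3 x4 0) by (apply wsq4_nonneg; lra).
    unfold V in *; fold k in hdec; nra.
  - exists (rho * dmin / dsum); split; [apply Rdiv_lt_0_compat; nra |].
    intros x1 x2 x3 x4 sol hx e he; rewrite dist4_norm4 in hx.
    pose proof (wsq4_lt_of_norm4 _ _ _ _ rho hrho hx) as h0.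
    assert (0 < rho ^ 2 / (k * e ^ 2))
      by (apply Rdiv_lt_0_compat; [| apply Rmult_lt_0_compat]; try apply pow_lt; lra).
    exists (rho ^ 2 / (k * e ^ 2)); intros t ht.
    pose proof (lyapunov_decay x1 x2 x3 x4 sol h0 t ltac:(lra)) as hdec.
    pose proof (exp_decay_lt k (rho ^ 2) (e ^ 2) t hk (pow_lt e 2 he) ht).
    pose proof (exp_pos (- k * t)).
    rewrite dist4_norm4; apply (norm4_lt_of_wsq4 dmin d1 d2 d3 d4); try assumption.
    unfold V in *; fold k in hdec; nra.
Qed.

End LyapunovStability.

Definition is_linearization4 (g : R -> R -> R -> R -> R) (s1 s2 s3 s4 : R)
    (l : R -> R -> R -> R -> R) : Prop :=
  forall eps, 0 < eps -> exists rho, 0 < rho /\ forall x1 x2 x3 x4,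
    norm4 (x1 - s1) (x2 - s2) (x3 - s3) (x4 - s4) < rho ->
    Rabs (g x1 x2 x3 x4 - l (x1 - s1) (x2 - s2) (x3 - s3) (x4 - s4))
      <= eps * norm4 (x1 - s1) (x2 - s2) (x3 - s3) (x4 - s4).

Lemma Rmult_le_of_Rabs_le (a r e n S : R) : 0 <= e ->
  Rabs a <= n -> Rabs r <= e * n -> n ^ 2 <= S -> a * r <= e * S.
Proof.
  intros he ha hr hS.
  pose proof (Rle_abs (a * r)); rewrite Rabs_mult in *.
  pose proof (Rabs_pos a); pose proof (Rabs_pos r); nra.
Qed.

Lemma is_linearization4_exact (g l : R -> R -> R -> R -> R) (s1 s2 s3 s4 : R) :
  (forall x1 x2 x3 x4, g x1 x2 x3 x4 = l (x1 - s1) (x2 - s2) (x3 - s3) (x4 - s4)) ->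
  is_linearization4 g s1 s2 s3 s4 l.
Proof.
  intros hg eps heps; exists 1; split; [lra |]; intros x1 x2 x3 x4 _.
  rewrite hg, Rminus_diag, Rabs_R0.
  apply Rmult_le_pos; [lra | apply norm4_nonneg].
Qed.

Lemma is_linearization4_of_differentiable (g l : R -> R -> R -> R -> R) (h : R -> R -> R)
    (s1 s2 s3 s4 lx ly : R) :
  differentiable_pt_lim h s3 s4 lx ly ->
  (forall x1 x2 x3 x4, g x1 x2 x3 x4 - l (x1 - s1) (x2 - s2) (x3 - s3) (x4 - s4)
     = h x3 x4 - h s3 s4 - (lx * (x3 - s3) + ly * (x4 - s4))) ->
  is_linearization4 g s1 s2 s3 s4 l.
Proof.
  intros hd hg eps heps; destruct (hd (mkposreal eps heps)) as (del & hdel); simpl in hdel.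
  exists del; split; [apply cond_pos |]; intros x1 x2 x3 x4 hx.
  destruct (Rabs_le_norm4 (x1 - s1) (x2 - s2) (x3 - s3) (x4 - s4)) as (_ & _ & a3 & a4).
  rewrite hg; apply (Rle_trans _ _ _ (hdel x3 x4 ltac:(lra) ltac:(lra))).
  apply Rmult_le_compat_l; [lra | apply Rmax_lub; assumption].
Qed.

Section Linearization.

Variables (f1 f2 f3 f4 L1 L2 L3 L4 : R -> R -> R -> R -> R) (s1 s2 s3 s4 d1 d2 d3 d4 c : R).
Hypotheses (hd1 : 0 < d1) (hd2 : 0 < d2) (hd3 : 0 < d3) (hd4 : 0 < d4) (hc : 0 < c).
Hypothesis linear_lyap : forall y1 y2 y3 y4,
  wdot4 d1 d2 d3 d4 y1 y2 y3 y4
    (L1 y1 y2 y3 y4) (L2 y1 y2 y3 y4) (L3 y1 y2 y3 y4) (L4 y1 y2 y3 y4)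
  <= - c * sqnorm4 y1 y2 y3 y4.
Hypotheses (lin1 : is_linearization4 f1 s1 s2 s3 s4 L1)
           (lin2 : is_linearization4 f2 s1 s2 s3 s4 L2)
           (lin3 : is_linearization4 f3 s1 s2 s3 s4 L3)
           (lin4 : is_linearization4 f4 s1 s2 s3 s4 L4).

Lemma local_lyapunov_of_linearization : exists rho, 0 < rho /\ forall x1 x2 x3 x4,
  norm4 (x1 - s1) (x2 - s2) (x3 - s3) (x4 - s4) < rho ->
  wdot4 d1 d2 d3 d4 (x1 - s1) (x2 - s2) (x3 - s3) (x4 - s4)
    (f1 x1 x2 x3 x4) (f2 x1 x2 x3 x4) (f3 x1 x2 x3 x4) (f4 x1 x2 x3 x4)
  <= - (c / 2) * sqnorm4 (x1 - s1) (x2 - s2) (x3 - s3) (x4 - s4).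
Proof.
  set (eps := c / (2 * (d1 + d2 + d3 + d4))).
  assert (heps : 0 < eps) by (apply Rdiv_lt_0_compat; lra).
  destruct (lin1 eps heps) as (r1 & hr1 & h1); destruct (lin2 eps heps) as (r2 & hr2 & h2).
  destruct (lin3 eps heps) as (r3 & hr3 & h3); destruct (lin4 eps heps) as (r4 & hr4 & h4).
  destruct (min4_spec r1 r2 r3 r4 hr1 hr2 hr3 hr4) as (hr & hm1 & hm2 & hm3 & hm4).
  exists (min4 r1 r2 r3 r4); split; [exact hr |].
  intros x1 x2 x3 x4 hx.
  set (y1 := x1 - s1); set (y2 := x2 - s2); set (y3 := x3 - s3); set (y4 := x4 - s4).
  destruct (Rabs_le_norm4 y1 y2 y3 y4) as (a1 & a2 & a3 & a4).
  pose proof (norm4_sq_le_sqnorm4 y1 y2 y3 y4) as hS.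
  assert (rem : forall d y r, 0 < d -> y * r <= eps * sqnorm4 y1 y2 y3 y4 ->
            d * y * r <= d * eps * sqnorm4 y1 y2 y3 y4).
  { intros d y r hd h; rewrite !Rmult_assoc; apply Rmult_le_compat_l; lra. }
  pose proof (rem d1 _ _ hd1 (Rmult_le_of_Rabs_le _ _ _ _ _ (Rlt_le _ _ heps) a1
                                (h1 x1 x2 x3 x4 ltac:(lra)) hS)).
  pose proof (rem d2 _ _ hd2 (Rmult_le_of_Rabs_le _ _ _ _ _ (Rlt_le _ _ heps) a2
                                (h2 x1 x2 x3 x4 ltac:(lra)) hS)).
  pose proof (rem d3 _ _ hd3 (Rmult_le_of_Rabs_le _ _ _ _ _ (Rlt_le _ _ heps) a3
                                (h3 x1 x2 x3 x4 ltac:(lra)) hS)).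
  pose proof (rem d4 _ _ hd4 (Rmult_le_of_Rabs_le _ _ _ _ _ (Rlt_le _ _ heps) a4
                                (h4 x1 x2 x3 x4 ltac:(lra)) hS)).
  pose proof (linear_lyap y1 y2 y3 y4).
  assert ((d1 + d2 + d3 + d4) * eps * sqnorm4 y1 y2 y3 y4 = c / 2 * sqnorm4 y1 y2 y3 y4)
    by (unfold eps; field; lra).
  unfold wdot4, y1, y2, y3, y4 in *; lra.
Qed.

Theorem las_of_linearization : locally_asymptotically_stable f1 f2 f3 f4 s1 s2 s3 s4.
Proof.
  destruct local_lyapunov_of_linearization as (rho & hrho & hloc).
  apply (lyapunov_las f1 f2 f3 f4 s1 s2 s3 s4 d1 d2 d3 d4 (c / 2) rho); auto; lra.
Qed.

End Linearization.

(** * A diagonal Lyapunov function for the Jacobian *)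

Lemma Rmult_le_Rabs_half_sq (a x y : R) : a * (x * y) <= Rabs a * (x ^ 2 + y ^ 2) / 2.
Proof.
  pose proof (Rle_abs (a * (x * y))); rewrite !Rabs_mult in H.
  pose proof (Rabs_pos a).
  assert (2 * (Rabs x * Rabs y) <= x ^ 2 + y ^ 2).
  { rewrite <- (pow2_abs x), <- (pow2_abs y); pose proof (pow2_ge_0 (Rabs x - Rabs y)); nra. }
  nra.
Qed.

Lemma metzler_subsolution (ga gb da db ka kb X Yp Zp : R) :
  0 < ga -> 0 < gb -> 0 < da -> 0 < db -> 0 < ka -> 0 < kb ->
  0 <= X -> 0 <= Yp -> 0 <= Zp ->
  0 < ga * gb * da * db - ka * gb * db * X - ka * kb * Yp * Zp ->
  exists v1 v2 v3 v4, 0 < v1 /\ 0 < v2 /\ 0 < v3 /\ 0 < v4 /\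
    - ga * v1 + X * v3 + Yp * v4 < 0 /\ - gb * v2 + Zp * v3 < 0 /\
    ka * v1 - da * v3 < 0 /\ kb * v2 - db * v4 < 0.
Proof.
  intros hga hgb hda hdb hka hkb hX hY hZ.
  set (gap := ga * gb * da * db - ka * gb * db * X - ka * kb * Yp * Zp); intros hgap.
  set (tau := gap / (2 * (ka * (Yp * kb + Yp * gb + gb * db)))).
  assert (htau : 0 < tau).
  { apply Rdiv_lt_0_compat; [lra |]; apply Rmult_lt_0_compat; [lra |].
    apply Rmult_lt_0_compat; [lra | nra]. }
  (* With v3 = 1, rows 1, 2 and 4 are solved with slack tau; row 3 then stays
     negative for tau small, which is possible exactly because gap > 0. *)
  set (v2 := (Zp + tau) / gb); set (v4 := (kb * v2 + tau) / db).
  set (v1 := (X + Yp * v4 + tau) / ga).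
  assert (hv2 : 0 < v2) by (apply Rdiv_lt_0_compat; lra).
  assert (hv4 : 0 < v4) by (apply Rdiv_lt_0_compat; nra).
  assert (hv1 : 0 < v1) by (apply Rdiv_lt_0_compat; nra).
  exists v1, v2, 1, v4; repeat split; try lra.
  - replace (- ga * v1 + X * 1 + Yp * v4) with (- tau) by (unfold v1; field; lra); lra.
  - replace (- gb * v2 + Zp * 1) with (- tau) by (unfold v2; field; lra); lra.
  - replace (ka * v1 - da * 1) with (- (gap / (2 * ga * gb * db))).
    + assert (0 < gap / (2 * ga * gb * db))
        by (apply Rdiv_lt_0_compat; [| repeat apply Rmult_lt_0_compat]; lra).
      lra.
    + unfold v1, v4, v2, tau, gap; field; nra.
  - replace (kb * v2 - db * v4) with (- tau) by (unfold v4; field; lra); lra.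
Qed.

Definition jac1 (ga X Y y1 y2 y3 y4 : R) : R := - ga * y1 + X * y3 + Y * y4.
Definition jac2 (gb Z y1 y2 y3 y4 : R) : R := - gb * y2 + Z * y3.
Definition jac3 (ka da y1 y2 y3 y4 : R) : R := ka * y1 - da * y3.
Definition jac4 (kb db y1 y2 y3 y4 : R) : R := kb * y2 - db * y4.

Section JacobianLyapunov.

Variables ga gb da db ka kb X Y Z : R.

Hypotheses (hga : 0 < ga) (hgb : 0 < gb) (hda : 0 < da) (hdb : 0 < db).
Hypotheses (hka : 0 < ka) (hkb : 0 < kb) (hX : 0 <= X) (hYZ : 0 <= Y * Z).
Hypothesis hdet : 0 < ga * gb * da * db - ka * kb * Y * Z - ka * gb * db * X.

Lemma jacobian_form_le (v1 v2 v3 v4 w1 w2 w3 w4 y1 y2 y3 y4 : R) :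
  0 < v1 -> 0 < v2 -> 0 < v3 -> 0 < v4 -> 0 < w1 -> 0 < w2 -> 0 < w3 -> 0 < w4 ->
  wdot4 (w1 / v1) (w2 / v2) (w3 / v3) (w4 / v4) y1 y2 y3 y4
    (jac1 ga X Y y1 y2 y3 y4) (jac2 gb Z y1 y2 y3 y4)
    (jac3 ka da y1 y2 y3 y4) (jac4 kb db y1 y2 y3 y4)
  <= (w1 * (- ga * v1 + X * v3 + Rabs Y * v4) + v1 * (- ga * w1 + ka * w3)) / 2 * (y1 / v1) ^ 2
   + (w2 * (- gb * v2 + Rabs Z * v3) + v2 * (- gb * w2 + kb * w4)) / 2 * (y2 / v2) ^ 2
   + (w3 * (ka * v1 - da * v3) + v3 * (X * w1 + Rabs Z * w2 - da * w3)) / 2 * (y3 / v3) ^ 2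
   + (w4 * (kb * v2 - db * v4) + v4 * (Rabs Y * w1 - db * w4)) / 2 * (y4 / v4) ^ 2.
Proof.
  intros hv1 hv2 hv3 hv4 hw1 hw2 hw3 hw4.
  (* In the coordinates z_i = y_i / v_i, bounding each cross term a z_i z_j by
     |a| (z_i^2 + z_j^2) / 2 leaves the coefficient (w_i (M v)_i + v_i (M^T w)_i) / 2
     on z_i^2, where M is the Jacobian with Y, Z replaced by |Y|, |Z|. *)
  set (z1 := y1 / v1); set (z2 := y2 / v2); set (z3 := y3 / v3); set (z4 := y4 / v4).
  assert (expand : wdot4 (w1 / v1) (w2 / v2) (w3 / v3) (w4 / v4) y1 y2 y3 y4
      (jac1 ga X Y y1 y2 y3 y4) (jac2 gb Z y1 y2 y3 y4)
      (jac3 ka da y1 y2 y3 y4) (jac4 kb db y1 y2 y3 y4)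
    = - ga * w1 * v1 * z1 ^ 2 - gb * w2 * v2 * z2 ^ 2
      - da * w3 * v3 * z3 ^ 2 - db * w4 * v4 * z4 ^ 2
      + (X * w1 * v3 + ka * w3 * v1) * (z1 * z3) + (Y * w1 * v4) * (z1 * z4)
      + (Z * w2 * v3) * (z2 * z3) + (kb * w4 * v2) * (z2 * z4)).
  { unfold wdot4, jac1, jac2, jac3, jac4, z1, z2, z3, z4; field; lra. }
  pose proof (Rmult_le_Rabs_half_sq (X * w1 * v3 + ka * w3 * v1) z1 z3) as a13.
  pose proof (Rmult_le_Rabs_half_sq (Y * w1 * v4) z1 z4) as a14.
  pose proof (Rmult_le_Rabs_half_sq (Z * w2 * v3) z2 z3) as a23.
  pose proof (Rmult_le_Rabs_half_sq (kb * w4 * v2) z2 z4) as a24.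
  rewrite Rabs_right in a13
    by (apply Rle_ge, Rplus_le_le_0_compat; repeat apply Rmult_le_pos; lra).
  rewrite Rabs_right in a24 by (apply Rle_ge; repeat apply Rmult_le_pos; lra).
  rewrite !Rabs_mult, (Rabs_right w1), (Rabs_right v4) in a14 by lra.
  rewrite !Rabs_mult, (Rabs_right w2), (Rabs_right v3) in a23 by lra.
  lra.
Qed.

Lemma jacobian_diagonal_lyapunov : exists d1 d2 d3 d4 c,
  0 < d1 /\ 0 < d2 /\ 0 < d3 /\ 0 < d4 /\ 0 < c /\
  forall y1 y2 y3 y4,
    wdot4 d1 d2 d3 d4 y1 y2 y3 y4
      (jac1 ga X Y y1 y2 y3 y4) (jac2 gb Z y1 y2 y3 y4)
      (jac3 ka da y1 y2 y3 y4) (jac4 kb db y1 y2 y3 y4)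
    <= - c * sqnorm4 y1 y2 y3 y4.
Proof.
  pose proof (Rabs_pos Y); pose proof (Rabs_pos Z).
  assert (0 < ga * gb * da * db - ka * gb * db * X - ka * kb * Rabs Y * Rabs Z).
  { replace (ka * kb * Rabs Y * Rabs Z) with (ka * kb * Rabs (Y * Z)) by (rewrite Rabs_mult; ring).
    rewrite Rabs_right; lra. }
  (* v and w solve M v < 0 and M^T w < 0 for the Metzler majorant M of the Jacobian;
     M^T has the same pattern as M after swapping coordinates 1,2 with 3,4. *)
  destruct (metzler_subsolution ga gb da db ka kb X (Rabs Y) (Rabs Z))
    as (v1 & v2 & v3 & v4 & hv1 & hv2 & hv3 & hv4 & r1 & r2 & r3 & r4); try lra.
  destruct (metzler_subsolution da db ga gb ka kb X (Rabs Z) (Rabs Y))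
    as (w3 & w4 & w1 & w2 & hw3 & hw4 & hw1 & hw2 & c3 & c4 & c1 & c2); try lra.
  set (k1 := (w1 * (- ga * v1 + X * v3 + Rabs Y * v4) + v1 * (- ga * w1 + ka * w3)) / 2).
  set (k2 := (w2 * (- gb * v2 + Rabs Z * v3) + v2 * (- gb * w2 + kb * w4)) / 2).
  set (k3 := (w3 * (ka * v1 - da * v3) + v3 * (X * w1 + Rabs Z * w2 - da * w3)) / 2).
  set (k4 := (w4 * (kb * v2 - db * v4) + v4 * (Rabs Y * w1 - db * w4)) / 2).
  assert (hk : k1 < 0 /\ k2 < 0 /\ k3 < 0 /\ k4 < 0)
    by (unfold k1, k2, k3, k4; repeat split; nra).
  set (c := min4 (- k1 / v1 ^ 2) (- k2 / v2 ^ 2) (- k3 / v3 ^ 2) (- k4 / v4 ^ 2)).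
  destruct (min4_spec (- k1 / v1 ^ 2) (- k2 / v2 ^ 2) (- k3 / v3 ^ 2) (- k4 / v4 ^ 2))
    as (hc & hc1 & hc2 & hc3 & hc4); try (apply Rdiv_lt_0_compat; [lra | apply pow_lt; lra]).
  assert (bound : forall k v y, 0 < v -> c <= - k / v ^ 2 -> k * (y / v) ^ 2 <= - c * y ^ 2).
  { intros k v y hv hck.
    replace (k * (y / v) ^ 2) with (k / v ^ 2 * y ^ 2) by (field; lra).
    apply Rmult_le_compat_r; [apply pow2_ge_0 | lra]. }
  exists (w1 / v1), (w2 / v2), (w3 / v3), (w4 / v4), c.
  repeat split; try (apply Rdiv_lt_0_compat; lra); try exact hc.
  intros y1 y2 y3 y4.
  apply (Rle_trans _ _ _ (jacobian_form_le v1 v2 v3 v4 w1 w2 w3 w4 y1 y2 y3 y4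
                            hv1 hv2 hv3 hv4 hw1 hw2 hw3 hw4)).
  pose proof (bound k1 v1 y1 hv1 hc1); pose proof (bound k2 v2 y2 hv2 hc2).
  pose proof (bound k3 v3 y3 hv3 hc3); pose proof (bound k4 v4 y4 hv4 hc4).
  unfold k1, k2, k3, k4, sqnorm4 in *; lra.
Qed.

End JacobianLyapunov.

(** * The two-gene network *)

Lemma Rpow_div_distr (x y : R) (n : nat) : y <> 0 -> (x / y) ^ n = x ^ n / y ^ n.
Proof. intros; unfold Rdiv; rewrite Rpow_mult_distr, pow_inv; reflexivity. Qed.

Lemma is_derive_pow_div (th p : R) (n : nat) : th <> 0 ->
  is_derive (fun x => (x / th) ^ n) p (INR n * p ^ (n - 1) / th ^ n).
Proof.
  intros hth; auto_derive; [exact I |].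
  destruct n as [| n]; [simpl; field; exact hth |].
  rewrite Rpow_mult_distr, pow_inv; simpl Init.Nat.pred.
  replace (S n - 1)%nat with n by lia; change (th ^ S n) with (th * th ^ n).
  field; split; [apply pow_nonzero, hth | exact hth].
Qed.

Lemma differentiable_pt_lim_ratio (u b : R -> R) (c x y du db : R) :
  is_derive u x du -> is_derive b y db -> 1 + u x * b y <> 0 ->
  differentiable_pt_lim (fun s t => c * u s / (1 + u s * b t)) x y
    (c * du / (1 + u x * b y) ^ 2) (- (c * u x ^ 2 * db) / (1 + u x * b y) ^ 2).
Proof.
  intros hu hb hne; apply filterdiff_differentiable_pt_lim.
  set (r := fun z => / (1 + z)).
  assert (hr : is_derive r (u x * b y) (- / (1 + u x * b y) ^ 2))
    by (unfold r; auto_derive; [exact hne | field; exact hne]).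
  assert (hcU : filterdiff (fun p : R * R => c * u (fst p)) (locally (x, y))
                  (fun p => scal (fst p) (c * du))).
  { apply (filterdiff_comp' (fun p : R * R => fst p) (fun s => c * u s) (x, y) (fun p => fst p)
            (fun z => scal z (c * du))).
    - apply filterdiff_linear, is_linear_fst.
    - exact (is_derive_scal _ _ _ _ hu). }
  assert (hU : filterdiff (fun p : R * R => u (fst p)) (locally (x, y))
                 (fun p => scal (fst p) du)).
  { apply (filterdiff_comp' (fun p : R * R => fst p) u (x, y) (fun p => fst p)
            (fun z => scal z du)).
    - apply filterdiff_linear, is_linear_fst.
    - exact hu. }
  assert (hB : filterdiff (fun p : R * R => b (snd p)) (locally (x, y))
                 (fun p => scal (snd p) db)).
  { apply (filterdiff_comp' (fun p : R * R => snd p) b (x, y) (fun p => snd p)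
            (fun z => scal z db)).
    - apply filterdiff_linear, is_linear_snd.
    - exact hb. }
  pose proof (filterdiff_mult_fct _ _ (x, y) _ _ Rmult_comm hU hB) as hUB.
  pose proof (filterdiff_comp' _ r (x, y) _ _ hUB hr) as hR.
  pose proof (filterdiff_mult_fct _ _ (x, y) _ _ Rmult_comm hcU hR) as hF.
  eapply filterdiff_ext_lin; [eapply filterdiff_ext; [| exact hF] |].
  - intros p; reflexivity.
  - intros p; unfold r; cbn -[pow Rdiv Rinv]; field; exact hne.
Qed.

Lemma hill_activation_differentiable (ma thaa thb : R) (naa nb : nat) (pa pb : R) :
  0 < thaa -> 0 < thb -> 0 < pa -> 0 < pb ->
  differentiable_pt_lim
    (fun x y => ma * (x / thaa) ^ naa / (1 + (x / thaa) ^ naa * (y / thb) ^ nb)) pa pb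
    (Xq ma thaa thb naa nb pa pb) (Yq ma thaa thb naa nb pa pb).
Proof.
  intros hthaa hthb hpa hpb.
  assert (hP : 0 < pa ^ naa) by (apply pow_lt; lra).
  assert (hQ : 0 < pb ^ nb) by (apply pow_lt; lra).
  assert (hT : 0 < thaa ^ naa) by (apply pow_lt; lra).
  assert (hS : 0 < thb ^ nb) by (apply pow_lt; lra).
  pose proof (differentiable_pt_lim_ratio (fun x => (x / thaa) ^ naa) (fun y => (y / thb) ^ nb)
    ma pa pb _ _ (is_derive_pow_div thaa pa naa ltac:(lra))
    (is_derive_pow_div thb pb nb ltac:(lra))) as P.
  cbv beta in P.
  replace (Xq ma thaa thb naa nb pa pb) with
    (ma * (INR naa * pa ^ (naa - 1) / thaa ^ naa)
       / (1 + (pa / thaa) ^ naa * (pb / thb) ^ nb) ^ 2).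
  2: { rewrite !Rpow_div_distr by lra; unfold Xq; rewrite pow_sqr, Rpow_mult_distr; field; nra. }
  replace (Yq ma thaa thb naa nb pa pb) with
    (- (ma * ((pa / thaa) ^ naa) ^ 2 * (INR nb * pb ^ (nb - 1) / thb ^ nb))
       / (1 + (pa / thaa) ^ naa * (pb / thb) ^ nb) ^ 2).
  2: { rewrite !Rpow_div_distr by lra; unfold Yq; rewrite pow_sqr, Rpow_mult_distr; field; nra. }
  apply P.
  assert (0 < (pa / thaa) ^ naa) by (apply pow_lt, Rdiv_lt_0_compat; lra).
  assert (0 < (pb / thb) ^ nb) by (apply pow_lt, Rdiv_lt_0_compat; lra).
  apply Rgt_not_eq; nra.
Qed.

Lemma hill_repression_derive (mb tha : R) (na : nat) (pa : R) : 0 < tha -> 0 < pa ->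
  is_derive (fun x => mb / (1 + (x / tha) ^ na)) pa (Zq mb tha na pa).
Proof.
  intros htha hpa.
  assert (hU : 0 < (pa / tha) ^ na) by (apply pow_lt, Rdiv_lt_0_compat; lra).
  assert (hf : is_derive (fun z => mb / (1 + z)) ((pa / tha) ^ na)
                 (- mb / (1 + (pa / tha) ^ na) ^ 2))
    by (auto_derive; [lra | field; lra]).
  pose proof (is_derive_comp _ _ pa _ _ hf (is_derive_pow_div tha pa na ltac:(lra))) as P.
  replace (Zq mb tha na pa) with
    (scal (INR na * pa ^ (na - 1) / tha ^ na) (- mb / (1 + (pa / tha) ^ na) ^ 2)); [exact P |].
  assert (0 < pa ^ na) by (apply pow_lt; lra); assert (0 < tha ^ na) by (apply pow_lt; lra).
  unfold Zq, scal; simpl; unfold mult; simpl.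
  rewrite Rpow_div_distr by lra; field; nra.
Qed.

Lemma Xq_nonneg (ma thaa thb : R) (naa nb : nat) (pa pb : R) :
  0 < ma -> 0 < thaa -> 0 < thb -> 0 < pa -> 0 < pb -> 0 <= Xq ma thaa thb naa nb pa pb.
Proof.
  intros; unfold Xq; apply Rdiv_le_0_compat.
  - repeat apply Rmult_le_pos; try apply pos_INR; try apply pow_le; lra.
  - apply pow_lt, Rplus_lt_0_compat; apply Rmult_lt_0_compat; apply pow_lt; lra.
Qed.

Lemma Yq_nonpos (ma thaa thb : R) (naa nb : nat) (pa pb : R) :
  0 < ma -> 0 < thaa -> 0 < thb -> 0 < pa -> 0 < pb -> Yq ma thaa thb naa nb pa pb <= 0.
Proof.
  intros; unfold Yq; rewrite <- Ropp_0; apply Ropp_le_contravar, Rdiv_le_0_compat.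
  - repeat apply Rmult_le_pos; try apply pos_INR; try apply pow_le; lra.
  - apply pow_lt, Rplus_lt_0_compat; apply Rmult_lt_0_compat; apply pow_lt; lra.
Qed.

Lemma Zq_nonpos (mb tha : R) (na : nat) (pa : R) :
  0 < mb -> 0 < tha -> 0 < pa -> Zq mb tha na pa <= 0.
Proof.
  intros; unfold Zq; rewrite <- Ropp_0; apply Ropp_le_contravar, Rdiv_le_0_compat.
  - repeat apply Rmult_le_pos; try apply pos_INR; try apply pow_le; lra.
  - apply pow_lt, Rplus_lt_0_compat; apply pow_lt; lra.
Qed.

Section TwoGeneNetwork.

Variables (ma mb ga gb ka kb da db tha thb thaa A1 B1 : R) (na nb naa : nat).
Variables (ra rb pa pb : R).
Hypotheses (htha : 0 < tha) (hthb : 0 < thb) (hthaa : 0 < thaa) (hpa : 0 < pa) (hpb : 0 < pb).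

Lemma f_ra_linearization : f_ra ma thaa thb naa nb ga A1 ra rb pa pb = 0 ->
  is_linearization4 (f_ra ma thaa thb naa nb ga A1) ra rb pa pb
    (jac1 ga (Xq ma thaa thb naa nb pa pb) (Yq ma thaa thb naa nb pa pb)).
Proof.
  intros hss; apply (is_linearization4_of_differentiable _ _ _ ra rb pa pb _ _
    (hill_activation_differentiable ma thaa thb naa nb pa pb hthaa hthb hpa hpb)).
  intros; unfold f_ra, jac1 in *; lra.
Qed.

Lemma f_rb_linearization : f_rb mb tha na gb B1 ra rb pa pb = 0 ->
  is_linearization4 (f_rb mb tha na gb B1) ra rb pa pb (jac2 gb (Zq mb tha na pa)).
Proof.
  intros hss; apply (is_linearization4_of_differentiable _ _ (fun x _ => mb / (1 + (x / tha) ^ na))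
    ra rb pa pb (Zq mb tha na pa) 0).
  - apply differentiable_pt_lim_proj1_0, is_derive_Reals, hill_repression_derive; assumption.
  - intros; unfold f_rb, jac2 in *; lra.
Qed.

Lemma f_pa_linearization : f_pa ka da ra rb pa pb = 0 ->
  is_linearization4 (f_pa ka da) ra rb pa pb (jac3 ka da).
Proof. intros hss; apply is_linearization4_exact; intros; unfold f_pa, jac3 in *; lra. Qed.

Lemma f_pb_linearization : f_pb kb db ra rb pa pb = 0 ->
  is_linearization4 (f_pb kb db) ra rb pa pb (jac4 kb db).
Proof. intros hss; apply is_linearization4_exact; intros; unfold f_pb, jac4 in *; lra. Qed.

End TwoGeneNetwork.

Theorem theorem2
  (ma mb ga gb ka kb da db tha thb thaa A1 B1 : R) (na nb naa : nat)
  (hma : 0 < ma) (hmb : 0 < mb) (hga : 0 < ga) (hgb : 0 < gb)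
  (hka : 0 < ka) (hkb : 0 < kb) (hda : 0 < da) (hdb : 0 < db)
  (htha : 0 < tha) (hthb : 0 < thb) (hthaa : 0 < thaa)
  (hA1 : 0 <= A1) (hB1 : 0 <= B1)
  (hna : (0 < na)%nat) (hnb : (0 < nb)%nat) (hnaa : (0 < naa)%nat)
  (ra rb pa pb : R) (hpa : 0 < pa) (hpb : 0 < pb)
  (hss1 : f_ra ma thaa thb naa nb ga A1 ra rb pa pb = 0)
  (hss2 : f_rb mb tha na gb B1 ra rb pa pb = 0)
  (hss3 : f_pa ka da ra rb pa pb = 0)
  (hss4 : f_pb kb db ra rb pa pb = 0) :
  let X := Xq ma thaa thb naa nb pa pb in
  let Y := Yq ma thaa thb naa nb pa pb in
  let Z := Zq mb tha na pa in
  let e1 := ga + gb + da + db in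
  let e2 := ga * gb + (ga + gb) * (da + db) + da * db - ka * X in
  let e3 := da * db * (ga + gb) + (da + db) * ga * gb - ka * (db + gb) * X in
  let e4 := ga * gb * da * db - ka * kb * Y * Z - ka * gb * db * X in
  0 < e1 -> 0 < e3 -> 0 < e4 -> 0 < e1 * e2 * e3 - e1 ^ 2 * e4 - e3 ^ 2 ->
  locally_asymptotically_stable
    (f_ra ma thaa thb naa nb ga A1) (f_rb mb tha na gb B1)
    (f_pa ka da) (f_pb kb db) ra rb pa pb.
Proof.
  intros X Y Z e1 e2 e3 e4 _ _ he4 _.
  assert (hX : 0 <= X) by (apply Xq_nonneg; assumption).
  assert (hYZ : 0 <= Y * Z).
  { assert (Y <= 0) by (apply Yq_nonpos; assumption).
    assert (Z <= 0) by (apply Zq_nonpos; assumption).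
    nra. }
  destruct (jacobian_diagonal_lyapunov ga gb da db ka kb X Y Z hga hgb hda hdb hka hkb hX hYZ he4)
    as (d1 & d2 & d3 & d4 & c & hd1 & hd2 & hd3 & hd4 & hc & hlin).
  apply (las_of_linearization _ _ _ _ (jac1 ga X Y) (jac2 gb Z) (jac3 ka da) (jac4 kb db)
           ra rb pa pb d1 d2 d3 d4 c); try assumption.
  - apply f_ra_linearization; assumption.
  - apply f_rb_linearization; assumption.
  - apply f_pa_linearization; assumption.
  - apply f_pb_linearization; assumption.
Qed.
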